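(* Let $G$ be a finite group with $g_2(G)\geq N$, and suppose there is an exact sequence $1\to\mathbb{Z}_n\to G\to\mathbb{Z}_m\to1$. Then $\min\{m,n\}\geq N$.
   Context: For a finite group $G$ and positive integer $N$, $r_N(G)$ is the minimum number of generators among subgroups of $G$ of index at most $N$, and $g_k(G)=\max\{N : |G|\geq N \text{ and } r_N(G)\geq k\}$. *)

From mathcomp Require Import all_boot all_fingroup all_solvable.
Set Implicit Arguments. Unset Strict Implicit. Unset Printing Implicit Defensive.
Local Open Scope group_scope.

(* d(H): minimum number of generators of H (min #|S| over S with <<S>> = H;
   S = H itself is a generating set, so the default value #|H| is attained). *)
Definition mingen (gT : finGroupType) (H : {set gT}) : nat :=
  \big[minn/#|H|]_(S : {set gT} | <<S>> == H) #|S|.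

Definition rN (gT : finGroupType) (N : nat) (G : {group gT}) : nat :=
  \big[minn/#|G|]_(H : {group gT} | (H \subset G) && (#|G : H| <= N)) mingen H.

Definition gk (gT : finGroupType) (k : nat) (G : {group gT}) : nat :=
  \max_(N < #|G|.+1 | (0 < (N : nat)) && (k <= rN N G)) (N : nat).

From mathcomp Require Import all_boot all_order all_fingroup all_solvable.
Import Order.TTheory.
Local Open Scope group_scope.

(* A cyclic subgroup H of G of index at most M gives r_M(G) <= d(H) <= 1, so
   whenever r_M(G) >= 2 every cyclic subgroup of G has index larger than M;
   hence g_2(G) is smaller than the index of every cyclic subgroup.  The
   kernel K is cyclic of index m, and a preimage x of a generator of G/K has
   order at least m, so <[x]> is cyclic of index at most |G|/m = n. *)

Lemma bigmin_leq {I : finType} (P : pred I) (F : I -> nat) (d : nat) {j : I} :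
  P j -> \big[minn/d]_(i | P i) F i <= F j.
Proof.
by move=> Pj; rewrite -Order.NatOrder.minEnat -Order.NatOrder.leEnat;
  apply: bigmin_le_cond.
Qed.

Lemma mingen_cyclic {gT : finGroupType} {H : {group gT}} :
  cyclic H -> mingen H <= 1.
Proof.
case/cyclicP=> x ->; rewrite /mingen -(cards1 x).
exact: bigmin_leq.
Qed.

Lemma rN_le_mingen {gT : finGroupType} {M : nat} {G H : {group gT}} :
  H \subset G -> #|G : H| <= M -> rN M G <= mingen H.
Proof. by move=> sHG leHM; rewrite /rN; apply: bigmin_leq; rewrite sHG. Qed.

Lemma gk2_lt_indexg_cyclic {gT : finGroupType} {G H : {group gT}} :
  H \subset G -> cyclic H -> gk 2 G < #|G : H|.
Proof.
move=> sHG cH; rewrite -(prednK (indexg_gt0 G H)) ltnS.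
apply/bigmax_leqP=> M /andP[_ r2M]; rewrite -ltnS prednK // ltnNge.
apply: contraTN r2M => leHM; rewrite -ltnNge ltnS.
exact: leq_trans (rN_le_mingen sHG leHM) (mingen_cyclic cH).
Qed.

Lemma cyclic_quotient_lift {gT : finGroupType} {G K : {group gT}} :
  K <| G -> cyclic (G / K) ->
  exists2 x, x \in G & #|G : <[x]>| <= #|K|.
Proof.
move=> nsKG /cyclicP[y defGK].
have /morphimP[x Nx Gx def_y] : y \in G / K by rewrite defGK cycle_id.
exists x => //; have sxG : <[x]> \subset G by rewrite cycle_subG.
have le_GK_x : #|G / K| <= #[x].
  by rewrite defGK def_y -orderE dvdn_leq ?order_gt0 ?morph_order.
rewrite -(leq_pmul2l (cardG_gt0 <[x]>)) Lagrange // mulnC.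
rewrite -(Lagrange (normal_sub nsKG)) -card_quotient ?normal_norm //.
by rewrite leq_mul2l le_GK_x orbT.
Qed.

Theorem mainTheorem13 (gT : finGroupType) (G K : {group gT}) (N n m : nat) :
  K <| G -> cyclic K -> #|K| = n ->
  cyclic (G / K) -> #|G / K| = m ->
  N <= gk 2 G ->
  N <= minn m n.
Proof.
move=> nsKG cK <- cGK <- leNg; have sKG := normal_sub nsKG.
have lt_g_m : gk 2 G < #|G / K|.
  by rewrite card_quotient ?normal_norm // gk2_lt_indexg_cyclic.
have [x Gx le_x_n] := cyclic_quotient_lift nsKG cGK.
have lt_g_n : gk 2 G < #|K|.
  apply: leq_trans le_x_n.
  by rewrite gk2_lt_indexg_cyclic ?cycle_subG ?cycle_cyclic.
by rewrite leq_min (leq_trans leNg (ltnW lt_g_m))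
  (leq_trans leNg (ltnW lt_g_n)).
Qed.
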